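(* Let $(X_n)_{n\ge0}$ be a discrete-time Markov chain on a finite state space $\Sigma$ with transition matrix $P$, initial distribution $\nu$, mixing time $T$ and invariant distribution $\pi$. Then for every $n\ge1$, every $f:\Sigma\to[-1,1]$ with $\pi(f)=0$ and $\pi(f^2)\le\sigma^2$, and every $\gamma\in(0,\sigma^2\wedge\frac12]$, $$\mathbb P\Big[\sum_{i<n}f(X_i)\ge n\gamma\Big]\le4\exp\Big\{-\Big\lfloor\frac n{k(\gamma)T}-1\Big\rfloor\frac{\gamma^2}{6\sigma^2}\Big\},$$ where $k(\gamma)=-\log_2(\pi_\star\gamma^2/(6\sigma^2))$ and $\pi_\star=\min_{x\in\Sigma}\pi(x)$.
   Context: The mixing time is $T=\min\{n\ge0:\max_{x\in\Sigma}\|P^n(x,\cdot)-\pi\|_{TV}\le1/4\}$ with $\|\nu-\nu'\|_{TV}=\frac12\sum_x|\nu(x)-\nu'(x)|$. $\pi(f)=\sum_x\pi(x)f(x)$. *)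

(* classical reals. State space Sigma = {0, ..., N-1}. *)
From Stdlib Require Import Reals List.
Import ListNotations.
Open Scope R_scope.

Fixpoint sumR (n : nat) (g : nat -> R) : R :=
  match n with O => 0 | S m => sumR m g + g m end.

(* min_{i<n} g i  (n >= 1) *)
Fixpoint minR (n : nat) (g : nat -> R) : R :=
  match n with
  | O => 0
  | S m => match m with O => g O | _ => Rmin (minR m g) (g m) end
  end.

Definition is_distribution (N : nat) (mu : nat -> R) : Prop :=
  (forall x, (x < N)%nat -> 0 <= mu x) /\ sumR N mu = 1.

Definition is_stochastic (N : nat) (P : nat -> nat -> R) : Prop :=
  (forall x y, (x < N)%nat -> (y < N)%nat -> 0 <= P x y) /\
  (forall x, (x < N)%nat -> sumR N (P x) = 1).

Fixpoint matpow (N : nat) (P : nat -> nat -> R) (n : nat) : nat -> nat -> R :=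
  match n with
  | O => fun x y => if Nat.eqb x y then 1 else 0
  | S m => fun x y => sumR N (fun z => matpow N P m x z * P z y)
  end.

Definition is_invariant (N : nat) (P : nat -> nat -> R) (pi : nat -> R) : Prop :=
  is_distribution N pi /\
  (forall y, (y < N)%nat -> sumR N (fun x => pi x * P x y) = pi y).

Definition tv (N : nat) (mu mu' : nat -> R) : R :=
  / 2 * sumR N (fun x => Rabs (mu x - mu' x)).

Definition mixed_at (N : nat) (P : nat -> nat -> R) (pi : nat -> R) (n : nat) : Prop :=
  forall x, (x < N)%nat -> tv N (matpow N P n x) pi <= / 4.

Definition is_mixing_time (N : nat) (P : nat -> nat -> R) (pi : nat -> R) (T : nat) : Prop :=
  mixed_at N P pi T /\ (forall m, (m < T)%nat -> ~ mixed_at N P pi m).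

Fixpoint all_paths (N n : nat) : list (list nat) :=
  match n with
  | O => [nil]
  | S m => flat_map (fun x => map (cons x) (all_paths N m)) (seq 0 N)
  end.

Fixpoint chain_weight (P : nat -> nat -> R) (x : nat) (rest : list nat) : R :=
  match rest with
  | nil => 1
  | y :: r => P x y * chain_weight P y r
  end.

Definition path_weight (nu : nat -> R) (P : nat -> nat -> R) (p : list nat) : R :=
  match p with
  | nil => 1
  | x :: r => nu x * chain_weight P x r
  end.

Definition path_sum (f : nat -> R) (p : list nat) : R :=
  fold_right (fun x acc => f x + acc) 0 p.

Definition prob_sum_ge (N : nat) (nu : nat -> R) (P : nat -> nat -> R)
  (f : nat -> R) (n : nat) (c : R) : R :=
  fold_right Rplus 0
    (map (fun p => path_weight nu P p * (if Rle_dec c (path_sum f p) then 1 else 0))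
         (all_paths N n)).

Definition pi_star (N : nat) (pi : nat -> R) : R := minR N pi.

Definition log2 (x : R) : R := ln x / ln 2.

Definition floorR (x : R) : R := IZR (Int_part x).

(* Iterating the total-variation contraction of P^T shows that after
   L = jT steps, with 2^-j <= pi_star gamma^2 / (6 sigma^2) (so j is about k(gamma)),
   E_x[g(X_L)] <= pi(g) + 2^-j osc(g) for every g. For lambda = gamma / (2 sigma^2) this gives
   E_x[exp(lambda f(X_L))] <= exp(27/100 gamma^2 / sigma^2) uniformly in x. Along each
   residue class of times modulo L the Markov property then bounds E[exp(lambda S_r)] by
   exp(lambda) times one such factor per block, and Jensen's inequality over the L classes
   bounds E[exp((lambda / L) sum_i f(X_i))] by their average. The Chernoff bound at level
   n gamma concludes, the constant 4 absorbing exp(lambda) <= exp(1/2). *)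
From Stdlib Require Import Reals List Lra Lia ZArith.
From Coquelicot Require Import Coquelicot.
Open Scope R_scope.

Lemma sumR_ext n g h : (forall i, (i < n)%nat -> g i = h i) -> sumR n g = sumR n h.
Proof.
  induction n as [|n IH]; intros H; simpl; auto.
  rewrite IH by (intros; apply H; lia). rewrite H by lia. reflexivity.
Qed.

Lemma sumR_le n g h : (forall i, (i < n)%nat -> g i <= h i) -> sumR n g <= sumR n h.
Proof.
  induction n as [|n IH]; intros H; simpl; [lra|].
  assert (g n <= h n) by (apply H; lia).
  assert (sumR n g <= sumR n h) by (apply IH; intros; apply H; lia).
  lra.
Qed.

Lemma sumR_const n c : sumR n (fun _ => c) = INR n * c.
Proof. induction n as [|n IH]; simpl sumR; [simpl; lra|]. rewrite IH, S_INR; lra. Qed.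

Lemma sumR_nonneg n g : (forall i, (i < n)%nat -> 0 <= g i) -> 0 <= sumR n g.
Proof.
  intros H. apply Rle_trans with (sumR n (fun _ => 0)).
  - rewrite sumR_const; lra.
  - apply sumR_le; auto.
Qed.

Lemma sumR_plus n g h : sumR n (fun i => g i + h i) = sumR n g + sumR n h.
Proof. induction n as [|n IH]; simpl; [lra|]. rewrite IH; lra. Qed.

Lemma sumR_minus n g h : sumR n (fun i => g i - h i) = sumR n g - sumR n h.
Proof. induction n as [|n IH]; simpl; [lra|]. rewrite IH; lra. Qed.

Lemma sumR_scal_l n c g : sumR n (fun i => c * g i) = c * sumR n g.
Proof. induction n as [|n IH]; simpl; [lra|]. rewrite IH; lra. Qed.

Lemma sumR_scal_r n c g : sumR n (fun i => g i * c) = sumR n g * c.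
Proof. induction n as [|n IH]; simpl; [lra|]. rewrite IH; lra. Qed.

Lemma sumR_swap n m (F : nat -> nat -> R) :
  sumR n (fun i => sumR m (F i)) = sumR m (fun j => sumR n (fun i => F i j)).
Proof.
  induction n as [|n IH]; simpl.
  - rewrite sumR_const; simpl; lra.
  - rewrite IH, <- sumR_plus; reflexivity.
Qed.

Lemma sumR_kronecker n y h : (y < n)%nat ->
  sumR n (fun x => (if Nat.eqb y x then 1 else 0) * h x) = h y.
Proof.
  induction n as [|n IH]; intros Hy; [lia|]. simpl.
  destruct (Nat.eqb_spec y n) as [<-|Hne].
  - rewrite (sumR_ext _ _ (fun _ => 0)), sumR_const; [lra|].
    intros i Hi. destruct (Nat.eqb_spec y i); [lia|lra].
  - rewrite IH by lia. lra.
Qed.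

Lemma sumR_kronecker_r n y h : (y < n)%nat ->
  sumR n (fun x => h x * (if Nat.eqb x y then 1 else 0)) = h y.
Proof.
  intros Hy. rewrite <- (sumR_kronecker n y h Hy).
  apply sumR_ext. intros i _. rewrite Nat.eqb_sym. lra.
Qed.

Lemma sumR_mono_n g m n : (forall i, (i < n)%nat -> 0 <= g i) -> (m <= n)%nat ->
  sumR m g <= sumR n g.
Proof.
  intros Hg H. induction H as [|n H IH]; [lra|]. simpl.
  assert (0 <= g n) by (apply Hg; lia).
  assert (sumR m g <= sumR n g) by (apply IH; intros; apply Hg; lia).
  lra.
Qed.

Lemma minR_spec N g : (0 < N)%nat ->
  (forall i, (i < N)%nat -> minR N g <= g i) /\ exists i, (i < N)%nat /\ minR N g = g i.
Proof.
  induction N as [|N IH]; intros HN; [lia|]. destruct N as [|N].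
  - split; [intros i Hi; replace i with 0%nat by lia; simpl; lra|]. exists 0%nat; auto.
  - destruct IH as [Hle [i0 [Hi0 E]]]; [lia|].
    change (minR (S (S N)) g) with (Rmin (minR (S N) g) (g (S N))).
    split.
    + intros i Hi. destruct (Nat.eq_dec i (S N)) as [->|]; [apply Rmin_r|].
      eapply Rle_trans; [apply Rmin_l|]. apply Hle; lia.
    + destruct (Rle_dec (minR (S N) g) (g (S N))).
      * exists i0. split; [lia|]. rewrite Rmin_left; auto.
      * exists (S N). split; [lia|]. rewrite Rmin_right; lra.
Qed.

Definition lsum {A} (l : list A) (F : A -> R) : R := fold_right Rplus 0 (map F l).

Lemma lsum_app {A} (l1 l2 : list A) F : lsum (l1 ++ l2) F = lsum l1 F + lsum l2 F.
Proof. unfold lsum. induction l1; simpl; [lra|]. rewrite IHl1; lra. Qed.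

Lemma lsum_seq N F : lsum (seq 0 N) F = sumR N F.
Proof. induction N as [|N IH]; auto. rewrite seq_S, lsum_app, IH. unfold lsum; simpl. lra. Qed.

Lemma lsum_ext {A} (l : list A) F G : (forall x, In x l -> F x = G x) -> lsum l F = lsum l G.
Proof. unfold lsum; induction l; simpl; intros H; auto. rewrite H, IHl; auto. Qed.

Lemma lsum_le {A} (l : list A) F G : (forall x, In x l -> F x <= G x) -> lsum l F <= lsum l G.
Proof.
  unfold lsum; induction l as [|a l IH]; simpl; intros H; [lra|].
  assert (F a <= G a) by auto. assert (fold_right Rplus 0 (map F l) <= fold_right Rplus 0 (map G l)) by auto.
  lra.
Qed.

Lemma lsum_scal_l {A} (l : list A) c F : lsum l (fun x => c * F x) = c * lsum l F.
Proof. unfold lsum; induction l; simpl; [lra|]. rewrite IHl; lra. Qed.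

Lemma lsum_sumR {A} (l : list A) m (F : A -> nat -> R) :
  lsum l (fun p => sumR m (F p)) = sumR m (fun r => lsum l (fun p => F p r)).
Proof.
  unfold lsum; induction l; simpl; [rewrite sumR_const; lra|].
  rewrite IHl, <- sumR_plus. reflexivity.
Qed.

Lemma lsum_all_paths_S N m F :
  lsum (all_paths N (S m)) F = sumR N (fun x => lsum (all_paths N m) (fun q => F (x :: q))).
Proof.
  simpl. rewrite <- lsum_seq.
  induction (seq 0 N) as [|x s IH]; simpl; auto.
  rewrite lsum_app, IH. unfold lsum at 1 2 4. rewrite map_map. reflexivity.
Qed.

Lemma in_all_paths_lt N n p x : In p (all_paths N n) -> In x p -> (x < N)%nat.
Proof.
  revert p; induction n as [|n IH]; simpl; intros p Hp Hx.
  - destruct Hp as [<-|[]]. destruct Hx.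
  - apply in_flat_map in Hp as [y [Hy Hp]]. apply in_map_iff in Hp as [q [<- Hq]].
    apply in_seq in Hy. destruct Hx as [<-|Hx]; [lia|]. eauto.
Qed.

Section MatrixPowers.

Variables (N : nat) (P : nat -> nat -> R).
Hypothesis HP : is_stochastic N P.

Lemma matpow_nonneg t x y : (y < N)%nat -> 0 <= matpow N P t x y.
Proof.
  revert y; induction t as [|t IH]; intros y Hy; simpl.
  - destruct (Nat.eqb x y); lra.
  - apply sumR_nonneg. intros z Hz. apply Rmult_le_pos; auto. apply (proj1 HP); auto.
Qed.

Lemma matpow_row_sum t x : (x < N)%nat -> sumR N (matpow N P t x) = 1.
Proof.
  revert x; induction t as [|t IH]; intros x Hx; simpl.
  - transitivity (sumR N (fun y => (if Nat.eqb x y then 1 else 0) * 1)).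
    + apply sumR_ext. intros; ring.
    + apply sumR_kronecker; auto.
  - rewrite sumR_swap, <- (IH x Hx). apply sumR_ext. intros z Hz.
    rewrite sumR_scal_l, (proj2 HP z Hz). lra.
Qed.

Lemma matpow_1 x y : (x < N)%nat -> matpow N P 1 x y = P x y.
Proof. intros Hx. apply (sumR_kronecker N x (fun z => P z y) Hx). Qed.

Lemma matpow_add a b x z : (z < N)%nat ->
  matpow N P (a + b) x z = sumR N (fun y => matpow N P a x y * matpow N P b y z).
Proof.
  revert z; induction b as [|b IH]; intros z Hz.
  - rewrite Nat.add_0_r. symmetry. apply (sumR_kronecker_r N z (matpow N P a x) Hz).
  - rewrite Nat.add_succ_r. simpl.
    transitivity (sumR N (fun w => sumR N (fun y => matpow N P a x y * (matpow N P b y w * P w z)))).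
    { apply sumR_ext. intros w Hw. rewrite IH, <- sumR_scal_r by auto.
      apply sumR_ext. intros; lra. }
    rewrite sumR_swap. apply sumR_ext. intros. apply sumR_scal_l.
Qed.

Lemma invariant_matpow pi : is_invariant N P pi ->
  forall t y, (y < N)%nat -> sumR N (fun x => pi x * matpow N P t x y) = pi y.
Proof.
  intros Hpi t; induction t as [|t IH]; intros y Hy; simpl.
  - apply sumR_kronecker_r; auto.
  - transitivity (sumR N (fun x => sumR N (fun z => pi x * matpow N P t x z * P z y))).
    { apply sumR_ext. intros. rewrite <- sumR_scal_l. apply sumR_ext. intros; lra. }
    rewrite sumR_swap, <- (proj2 Hpi y Hy). apply sumR_ext. intros z Hz.
    rewrite sumR_scal_r, IH; auto.
Qed.

Definition transition_mean (t : nat) (g : nat -> R) (x : nat) : R :=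
  sumR N (fun z => matpow N P t x z * g z).

Lemma transition_mean_add g a t x :
  transition_mean (a + t) g x = sumR N (fun y => matpow N P a x y * transition_mean t g y).
Proof.
  unfold transition_mean.
  transitivity (sumR N (fun z => sumR N (fun y => matpow N P a x y * (matpow N P t y z * g z)))).
  { apply sumR_ext. intros z Hz. rewrite matpow_add, <- sumR_scal_r by auto.
    apply sumR_ext. intros; lra. }
  rewrite sumR_swap. apply sumR_ext. intros. apply sumR_scal_l.
Qed.

Lemma invariant_transition_mean pi g t : is_invariant N P pi ->
  sumR N (fun x => pi x * transition_mean t g x) = sumR N (fun z => pi z * g z).
Proof.
  intros Hpi. unfold transition_mean.
  transitivity (sumR N (fun x => sumR N (fun z => pi x * matpow N P t x z * g z))).
  { apply sumR_ext. intros. rewrite <- sumR_scal_l. apply sumR_ext. intros; lra. }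
  rewrite sumR_swap. apply sumR_ext. intros z Hz.
  rewrite sumR_scal_r, invariant_matpow; auto.
Qed.

Variables (pi : nat -> R) (T : nat).
Hypothesis HT : mixed_at N P pi T.

(* Centre [h] at the midpoint [c] of its range: since both rows of P^T are probability
   vectors, the difference of means is [sum (P^T(x,.) - P^T(x',.)) (h - c)], and each row
   is within 1/4 of [pi] in total variation. *)
Lemma mixed_at_oscillation h a w x x' : 0 <= w ->
  (forall y, (y < N)%nat -> a <= h y <= a + w) -> (x < N)%nat -> (x' < N)%nat ->
  transition_mean T h x - transition_mean T h x' <= / 2 * w.
Proof.
  intros Hw Hh Hx Hx'. unfold transition_mean.
  set (c := a + w / 2).
  assert (E : sumR N (fun y => matpow N P T x y * h y) - sumR N (fun y => matpow N P T x' y * h y)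
     = sumR N (fun y => (matpow N P T x y - matpow N P T x' y) * (h y - c))).
  { rewrite <- sumR_minus.
    transitivity (sumR N (fun y => (matpow N P T x y - matpow N P T x' y) * (h y - c)
                              + c * (matpow N P T x y - matpow N P T x' y))).
    - apply sumR_ext; intros; ring.
    - rewrite sumR_plus, sumR_scal_l, sumR_minus, !matpow_row_sum; auto. ring. }
  rewrite E.
  apply Rle_trans with (sumR N (fun y => Rabs (matpow N P T x y - pi y) * (w / 2)
                                     + Rabs (matpow N P T x' y - pi y) * (w / 2))).
  - apply sumR_le. intros y Hy. specialize (Hh y Hy).
    assert (Rabs (h y - c) <= w / 2) by (apply Rabs_le; unfold c; lra).
    eapply Rle_trans; [apply Rle_abs|]. rewrite Rabs_mult, <- Rmult_plus_distr_r.
    apply Rmult_le_compat; auto using Rabs_pos.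
    replace (matpow N P T x y - matpow N P T x' y)
      with ((matpow N P T x y - pi y) - (matpow N P T x' y - pi y)) by ring.
    eapply Rle_trans; [apply Rabs_triang|]. rewrite Rabs_Ropp. lra.
  - rewrite sumR_plus, !sumR_scal_r. pose proof (HT x Hx). pose proof (HT x' Hx').
    unfold tv in *. nra.
Qed.

Lemma transition_mean_oscillation g a0 w0 i : (0 < N)%nat -> 0 <= w0 ->
  (forall y, (y < N)%nat -> a0 <= g y <= a0 + w0) ->
  exists a, forall x, (x < N)%nat -> a <= transition_mean (i * T) g x <= a + (/2)^i * w0.
Proof.
  intros HN Hw Hg. induction i as [|i [a Ha]].
  - exists a0. intros x Hx. unfold transition_mean. simpl.
    rewrite sumR_kronecker by auto. specialize (Hg x Hx). lra.
  - set (G := fun x => sumR N (fun y => matpow N P T x y * transition_mean (i * T) g y)).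
    destruct (minR_spec N G HN) as [Hmin [x0 [Hx0 E]]].
    exists (minR N G). intros x Hx.
    change (S i * T)%nat with (T + i * T)%nat. rewrite transition_mean_add.
    fold (G x). split; auto. rewrite E.
    assert (0 <= (/2)^i * w0) by (apply Rmult_le_pos; auto; apply pow_le; lra).
    pose proof (mixed_at_oscillation _ _ _ x x0 H Ha Hx Hx0) as Hosc.
    unfold G, transition_mean in *. simpl pow. lra.
Qed.

Lemma transition_mean_le_mixing g a0 w0 j x : is_invariant N P pi -> (0 < N)%nat -> 0 <= w0 ->
  (forall y, (y < N)%nat -> a0 <= g y <= a0 + w0) -> (x < N)%nat ->
  transition_mean (j * T) g x <= sumR N (fun z => pi z * g z) + (/2)^j * w0.
Proof.
  intros Hpi HN Hw Hg Hx.
  destruct (transition_mean_oscillation g a0 w0 j HN Hw Hg) as [a Ha].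
  rewrite <- (invariant_transition_mean pi g (j * T) Hpi).
  assert (a <= sumR N (fun x => pi x * transition_mean (j * T) g x)).
  { apply Rle_trans with (sumR N (fun x => pi x * a)).
    - rewrite sumR_scal_r, (proj2 (proj1 Hpi)). lra.
    - apply sumR_le. intros. apply Rmult_le_compat_l; [apply (proj1 (proj1 Hpi)); auto|].
      apply Ha; auto. }
  specialize (Ha x Hx). lra.
Qed.

End MatrixPowers.

Lemma exp_le_exp x y : x <= y -> exp x <= exp y.
Proof. intros [H|E]; [apply Rlt_le, exp_increasing; auto | rewrite E; lra]. Qed.

Lemma exp_ge_1 x : 0 <= x -> 1 <= exp x.
Proof. pose proof (exp_ineq1_le x). lra. Qed.

Lemma nondecreasing_of_deriv f f' a b : a <= b ->
  (forall c, a <= c <= b -> derivable_pt_lim f c (f' c)) ->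
  (forall c, a <= c <= b -> 0 <= f' c) -> f a <= f b.
Proof.
  intros [Hab|E] Hd Hp; [|rewrite E; lra].
  destruct (MVT_cor2 f f' a b Hab Hd) as [c [E Hc]].
  assert (0 <= f' c) by (apply Hp; lra). nra.
Qed.

Definition exp_rem2 x := exp x - 1 - x - x^2/2.
Definition exp_rem3 x := exp_rem2 x - x^3/6.

Lemma exp_rem2_nondecreasing a b : a <= b -> exp_rem2 a <= exp_rem2 b.
Proof.
  intros H. apply (nondecreasing_of_deriv exp_rem2 (fun x => exp x - 1 - x)); auto.
  - intros c _. apply is_derive_Reals. unfold exp_rem2. auto_derive; auto. field.
  - intros c _. pose proof (exp_ineq1_le c). lra.
Qed.

Lemma exp_rem2_0 : exp_rem2 0 = 0.
Proof. unfold exp_rem2. rewrite exp_0. field. Qed.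

Lemma exp_rem3_nonneg x : 0 <= exp_rem3 x.
Proof.
  assert (D : forall c, derivable_pt_lim exp_rem3 c (exp_rem2 c)).
  { intros c. apply is_derive_Reals. unfold exp_rem3, exp_rem2. auto_derive; auto. field. }
  assert (E : exp_rem3 0 = 0) by (unfold exp_rem3; rewrite exp_rem2_0; field).
  destruct (Rle_dec 0 x).
  - rewrite <- E. apply (nondecreasing_of_deriv exp_rem3 exp_rem2); auto.
    intros c Hc. rewrite <- exp_rem2_0. apply exp_rem2_nondecreasing. lra.
  - assert (- exp_rem3 x <= - exp_rem3 0).
    { apply (nondecreasing_of_deriv (fun y => - exp_rem3 y) (fun y => - exp_rem2 y)); [lra| |].
      - intros c _. apply derivable_pt_lim_opp, D.
      - intros c Hc. assert (exp_rem2 c <= exp_rem2 0) by (apply exp_rem2_nondecreasing; lra).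
        rewrite exp_rem2_0 in H. lra. }
    lra.
Qed.

Lemma exp_ge_taylor3 x : 1 + x + x^2/2 + x^3/6 <= exp x.
Proof. pose proof (exp_rem3_nonneg x). unfold exp_rem3, exp_rem2 in H. lra. Qed.

(* For [u > 0] invert the cubic lower bound at [-u]. *)
Lemma exp_le_quadratic u : - / 2 <= u <= / 2 -> exp u <= 1 + u + 7/10 * u^2.
Proof.
  intros Hu. destruct (Rle_dec u 0).
  - assert (exp_rem2 u <= exp_rem2 0) by (apply exp_rem2_nondecreasing; lra).
    rewrite exp_rem2_0 in H. unfold exp_rem2 in H. nra.
  - pose proof (exp_ge_taylor3 (- u)) as Hlow.
    set (q := 1 + - u + (- u)^2/2 + (- u)^3/6) in Hlow.
    assert (Hq : 0 < q) by (unfold q; nra).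
    assert (Hprod : 1 <= (1 + u + 7/10 * u^2) * q).
    { assert (0 <= u^2 * (3/10 - 7/15 * u + 7/30 * u^2 - 7/60 * u^3))
        by (apply Rmult_le_pos; nra).
      unfold q. nra. }
    rewrite <- (Rinv_inv (exp u)), <- exp_Ropp.
    apply Rle_trans with (/ q).
    + apply Rinv_le_contravar; auto.
    + apply (Rmult_le_reg_r q); auto. rewrite Rinv_l by lra. lra.
Qed.

Lemma exp_le_4 l : l <= / 2 -> exp l <= 4.
Proof.
  intros Hl. apply Rle_trans with (exp (/ 2)); [apply exp_le_exp; auto|].
  pose proof (exp_le_quadratic (/ 2)). lra.
Qed.

Lemma exp_sub_exp_opp_le l : 0 <= l <= / 2 -> exp l - exp (- l) <= 1071 / 1000.
Proof.
  intros Hl. pose proof (exp_le_quadratic (/ 2)). pose proof (exp_ge_taylor3 (- / 2)).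
  assert (exp l <= exp (/ 2)) by (apply exp_le_exp; lra).
  assert (exp (- / 2) <= exp (- l)) by (apply exp_le_exp; lra).
  lra.
Qed.

(* Tangent line of [exp] at the mean. *)
Lemma exp_mean_le_mean_exp L xs : (0 < L)%nat ->
  exp (sumR L xs / INR L) <= sumR L (fun r => exp (xs r)) / INR L.
Proof.
  intros HL. assert (0 < INR L) by (apply lt_0_INR; auto).
  set (A := sumR L xs / INR L).
  assert (Htan : sumR L (fun r => exp A * (1 + (xs r - A))) <= sumR L (fun r => exp (xs r))).
  { apply sumR_le. intros r _. replace (xs r) with (A + (xs r - A)) at 2 by ring.
    rewrite exp_plus. apply Rmult_le_compat_l; [apply Rlt_le, exp_pos|apply exp_ineq1_le]. }
  rewrite sumR_scal_l, sumR_plus, sumR_minus, !sumR_const in Htan.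
  replace (INR L * 1 + (sumR L xs - INR L * A)) with (INR L) in Htan by (unfold A; field; lra).
  apply (Rmult_le_reg_r (INR L)); auto. unfold Rdiv. rewrite Rmult_assoc, Rinv_l by lra. lra.
Qed.

(* [feynman_kac N P F j i x] is E_x[F(i+1, X_1) * ... * F(i+j, X_j)]. *)
Fixpoint feynman_kac (N : nat) (P : nat -> nat -> R) (F : nat -> nat -> R)
    (j i x : nat) : R :=
  match j with
  | O => 1
  | S j => sumR N (fun y => P x y * F (S i) y * feynman_kac N P F j (S i) y)
  end.

Fixpoint time_sum (g : nat -> nat -> R) (i : nat) (p : list nat) : R :=
  match p with
  | nil => 0
  | x :: q => g i x + time_sum g (S i) q
  end.

Lemma time_sum_ext g g' i p : (forall t x, g t x = g' t x) -> time_sum g i p = time_sum g' i p.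
Proof. revert i; induction p; simpl; intros i H; auto. rewrite H, IHp; auto. Qed.

Lemma path_sum_time_sum f p i : path_sum f p = time_sum (fun _ x => f x) i p.
Proof. revert i; induction p; simpl; intros i; auto. rewrite (IHp (S i)). auto. Qed.

Lemma sumR_time_sum L G i p :
  sumR L (fun r => time_sum (G r) i p) = time_sum (fun t x => sumR L (fun r => G r t x)) i p.
Proof.
  revert i; induction p; simpl; intros i; [rewrite sumR_const; lra|].
  rewrite sumR_plus, IHp. auto.
Qed.

Lemma chain_exp_moment N P g l j i x :
  lsum (all_paths N j) (fun q => chain_weight P x q * exp (l * time_sum g (S i) q)) =
  feynman_kac N P (fun t y => exp (l * g t y)) j i x.
Proof.
  revert i x; induction j as [|j IH]; intros i x.
  - unfold lsum; simpl. rewrite Rmult_0_r, exp_0. lra.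
  - rewrite lsum_all_paths_S. simpl feynman_kac. apply sumR_ext. intros y _.
    rewrite <- IH, <- lsum_scal_l. unfold lsum. f_equal. apply map_ext. intros q. simpl.
    rewrite Rmult_plus_distr_l, exp_plus. ring.
Qed.

Lemma path_exp_moment N nu P g l m :
  lsum (all_paths N (S m)) (fun p => path_weight nu P p * exp (l * time_sum g 0 p)) =
  sumR N (fun x => nu x * exp (l * g 0%nat x) * feynman_kac N P (fun t y => exp (l * g t y)) m 0 x).
Proof.
  rewrite lsum_all_paths_S. apply sumR_ext. intros x _.
  rewrite <- chain_exp_moment, <- lsum_scal_l. unfold lsum. f_equal. apply map_ext. intros q.
  simpl. rewrite Rmult_plus_distr_l, exp_plus. ring.
Qed.

Section FeynmanKac.

Variables (N : nat) (P : nat -> nat -> R).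
Hypothesis HP : is_stochastic N P.

Lemma chain_weight_nonneg x q : (x < N)%nat -> (forall y, In y q -> (y < N)%nat) ->
  0 <= chain_weight P x q.
Proof.
  revert x; induction q as [|y q IH]; intros x Hx Hq; simpl; [lra|].
  apply Rmult_le_pos; [apply (proj1 HP); auto; apply Hq; simpl; auto|].
  apply IH; [apply Hq; simpl; auto|]. intros; apply Hq; simpl; auto.
Qed.

Lemma path_weight_nonneg nu n p : is_distribution N nu -> In p (all_paths N n) ->
  0 <= path_weight nu P p.
Proof.
  intros Hnu Hp. pose proof (in_all_paths_lt N n p) as Hb. destruct p as [|x q]; simpl; [lra|].
  apply Rmult_le_pos; [apply (proj1 Hnu); apply Hb; simpl; auto|].
  apply chain_weight_nonneg; [apply Hb; simpl; auto|]. intros; apply Hb; simpl; auto.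
Qed.

Lemma feynman_kac_ones F j i x :
  (forall t y, (i < t <= i + j)%nat -> F t y = 1) -> (x < N)%nat -> feynman_kac N P F j i x = 1.
Proof.
  revert i x; induction j as [|j IH]; intros i x HF Hx; simpl; auto.
  rewrite <- (proj2 HP x Hx). apply sumR_ext. intros y Hy.
  rewrite HF, IH by (auto; try intros; try apply HF; lia). lra.
Qed.

(* The Markov property at time [i + s] when no weight is collected before it. *)
Lemma feynman_kac_skip F s b i x : (0 < s)%nat -> (x < N)%nat ->
  (forall t y, (i < t < i + s)%nat -> F t y = 1) ->
  feynman_kac N P F (s + b) i x =
  sumR N (fun y => matpow N P s x y * F (i + s)%nat y * feynman_kac N P F b (i + s) y).
Proof.
  intros Hs. destruct s as [|s]; [lia|]. clear Hs.
  revert b; induction s as [|s IH]; intros b Hx HF.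
  - simpl plus. simpl feynman_kac. apply sumR_ext. intros y _.
    rewrite matpow_1 by auto. replace (i + 1)%nat with (S i) by lia. auto.
  - replace (S (S s) + b)%nat with (S s + S b)%nat by lia.
    rewrite IH by (auto; intros; apply HF; lia).
    transitivity (sumR N (fun y => matpow N P (S s) x y *
       sumR N (fun z => P y z * F (i + S (S s))%nat z * feynman_kac N P F b (i + S (S s)) z))).
    + apply sumR_ext. intros y _. rewrite HF by lia. simpl feynman_kac.
      replace (S (i + S s)) with (i + S (S s))%nat by lia. lra.
    + change (matpow N P (S (S s)) x) with (fun y => sumR N (fun z => matpow N P (S s) x z * P z y)).
      cbv beta.
      transitivity (sumR N (fun y => sumR N (fun z =>
         matpow N P (S s) x y * P y z * (F (i + S (S s))%nat z * feynman_kac N P F b (i + S (S s)) z)))).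
      { apply sumR_ext; intros. rewrite <- sumR_scal_l. apply sumR_ext; intros. lra. }
      rewrite sumR_swap. apply sumR_ext. intros z _. rewrite sumR_scal_r. lra.
Qed.

End FeynmanKac.

Definition class_restrict (L r : nat) (f : nat -> R) (t x : nat) : R :=
  if Nat.eqb (t mod L) r then f x else 0.

Lemma sumR_class_restrict L f t x : (0 < L)%nat ->
  sumR L (fun r => class_restrict L r f t x) = f x.
Proof.
  intros HL. unfold class_restrict.
  transitivity (sumR L (fun r => (if Nat.eqb (t mod L) r then 1 else 0) * f x)).
  - apply sumR_ext. intros r _. destruct (Nat.eqb (t mod L) r); lra.
  - apply (sumR_kronecker L (t mod L) (fun _ => f x)), Nat.mod_upper_bound. lia.
Qed.

Lemma mod_add_neq L i d : (0 < d < L)%nat -> ((i + d) mod L <> i mod L)%nat.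
Proof.
  intros Hd E. assert (HL : L <> 0%nat) by lia.
  pose proof (Nat.div_mod i L HL). pose proof (Nat.div_mod (i + d) L HL).
  set (a := (i / L)%nat) in *. set (b := ((i + d) / L)%nat) in *.
  destruct (Nat.le_gt_cases b a); nia.
Qed.

Section ClassMoments.

Variables (N : nat) (P : nat -> nat -> R) (L r : nat) (f : nat -> R) (l K : R).
Hypotheses (HP : is_stochastic N P) (HL : (0 < L)%nat) (HK : 0 <= K) (Hl : 0 <= l)
  (Hf : forall x, (x < N)%nat -> -1 <= f x <= 1)
  (Hstep : forall x, (x < N)%nat -> transition_mean N P L (fun y => exp (l * f y)) x <= exp K).

Let F t y := exp (l * class_restrict L r f t y).

Lemma class_weight_in t y : (t mod L = r)%nat -> F t y = exp (l * f y).
Proof. intros H. unfold F, class_restrict. rewrite H, Nat.eqb_refl. auto. Qed.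

Lemma class_weight_out t y : (t mod L <> r)%nat -> F t y = 1.
Proof.
  intros H. unfold F, class_restrict. apply Nat.eqb_neq in H. rewrite H, Rmult_0_r, exp_0. auto.
Qed.

Lemma exp_scale_le y : (y < N)%nat -> exp (l * f y) <= exp l.
Proof. intros Hy. destruct (Hf y Hy). apply exp_le_exp. nra. Qed.

(* Started at a time of class [r], the class is visited again every [L] steps,
   and each visit costs at most [exp K] by [Hstep]. *)
Lemma feynman_kac_class_aligned j i x : (i mod L = r)%nat -> (x < N)%nat ->
  feynman_kac N P F j i x <= exp (K * INR (j / L)).
Proof.
  revert i x. induction j as [j IH] using (well_founded_induction Wf_nat.lt_wf). intros i x Hi Hx.
  assert (Hout : forall t y, (i < t < i + L)%nat -> F t y = 1).
  { intros t y Ht. apply class_weight_out. replace t with (i + (t - i))%nat by lia.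
    rewrite <- Hi. apply mod_add_neq. lia. }
  destruct (Nat.lt_ge_cases j L) as [Hj|Hj].
  - rewrite feynman_kac_ones by (auto; intros; apply Hout; lia).
    rewrite Nat.div_small by auto. simpl. rewrite Rmult_0_r, exp_0. lra.
  - replace j with (L + (j - L))%nat by lia.
    rewrite feynman_kac_skip by (auto; intros; apply Hout; lia).
    assert (Hm : ((i + L) mod L = r)%nat).
    { replace (i + L)%nat with (i + 1 * L)%nat by lia. rewrite Nat.Div0.mod_add. auto. }
    set (b := (j - L)%nat).
    apply Rle_trans with
      (transition_mean N P L (fun y => exp (l * f y)) x * exp (K * INR (b / L))).
    + unfold transition_mean. rewrite <- sumR_scal_r. apply sumR_le. intros y Hy.
      rewrite class_weight_in by auto. apply Rmult_le_compat_l.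
      * apply Rmult_le_pos; [apply matpow_nonneg; auto | apply Rlt_le, exp_pos].
      * apply IH; auto. unfold b. lia.
    + replace (L + b)%nat with (b + 1 * L)%nat by lia. rewrite Nat.div_add by lia.
      rewrite plus_INR, Rmult_plus_distr_l, exp_plus, Rmult_comm. simpl INR.
      rewrite Rmult_1_r. apply Rmult_le_compat_l; [apply Rlt_le, exp_pos | apply Hstep; auto].
Qed.

(* Before the first visit to the class nothing is collected; the first visit costs at most [exp l]. *)
Lemma feynman_kac_class_le j i x : (x < N)%nat ->
  feynman_kac N P F j i x <= exp l * exp (K * INR (j / L)).
Proof.
  revert i x; induction j as [|j IH]; intros i x Hx.
  - simpl. rewrite Nat.Div0.div_0_l, Rmult_0_r, exp_0. pose proof (exp_ge_1 l Hl). lra.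
  - assert (Hmono : exp (K * INR (j / L)) <= exp (K * INR (S j / L))).
    { apply exp_le_exp, Rmult_le_compat_l, le_INR, Nat.Div0.div_le_mono; auto. }
    simpl feynman_kac.
    apply Rle_trans with (sumR N (fun y => P x y * (exp l * exp (K * INR (S j / L))))).
    + apply sumR_le. intros y Hy. rewrite Rmult_assoc. apply Rmult_le_compat_l; [apply (proj1 HP); auto|].
      destruct (Nat.eq_dec (S i mod L) r) as [E|E].
      * rewrite class_weight_in by auto.
        apply Rle_trans with (exp (l * f y) * exp (K * INR (S j / L))).
        -- apply Rmult_le_compat_l; [apply Rlt_le, exp_pos|].
           eapply Rle_trans; [apply feynman_kac_class_aligned|]; auto.
        -- apply Rmult_le_compat_r; [apply Rlt_le, exp_pos | apply exp_scale_le; auto].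
      * rewrite class_weight_out, Rmult_1_l by auto.
        eapply Rle_trans; [apply IH; auto|]. apply Rmult_le_compat_l; auto. apply Rlt_le, exp_pos.
    + rewrite sumR_scal_r, (proj2 HP x Hx). lra.
Qed.

Lemma class_exp_moment nu m : is_distribution N nu ->
  lsum (all_paths N (S m)) (fun p => path_weight nu P p * exp (l * time_sum (class_restrict L r f) 0 p))
  <= exp l * exp (K * INR (m / L)).
Proof.
  intros Hnu. rewrite path_exp_moment.
  apply Rle_trans with (sumR N (fun x => nu x * (exp l * exp (K * INR (m / L))))).
  - apply sumR_le. intros x Hx. rewrite Rmult_assoc. apply Rmult_le_compat_l; [apply (proj1 Hnu); auto|].
    change (fun t y => exp (l * class_restrict L r f t y)) with F.
    destruct (Nat.eq_dec (0 mod L) r) as [E|E].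
    + replace (exp (l * class_restrict L r f 0 x)) with (F 0%nat x) by reflexivity.
      rewrite class_weight_in by auto.
      apply Rle_trans with (exp (l * f x) * exp (K * INR (m / L))).
      * apply Rmult_le_compat_l; [apply Rlt_le, exp_pos | apply feynman_kac_class_aligned; auto].
      * apply Rmult_le_compat_r; [apply Rlt_le, exp_pos | apply exp_scale_le; auto].
    + replace (exp (l * class_restrict L r f 0 x)) with (F 0%nat x) by reflexivity.
      rewrite class_weight_out, Rmult_1_l by auto. apply feynman_kac_class_le; auto.
  - rewrite sumR_scal_r, (proj2 Hnu). lra.
Qed.

End ClassMoments.

Section Chernoff.

Variables (N : nat) (P : nat -> nat -> R) (nu f : nat -> R).
Hypotheses (HP : is_stochastic N P) (Hnu : is_distribution N nu).

Lemma prob_sum_ge_exp_moment n c th : 0 <= th ->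
  prob_sum_ge N nu P f n c <=
  exp (- th * c) * lsum (all_paths N n) (fun p => path_weight nu P p * exp (th * path_sum f p)).
Proof.
  intros Hth. unfold prob_sum_ge. fold (lsum (all_paths N n)
    (fun p => path_weight nu P p * (if Rle_dec c (path_sum f p) then 1 else 0))).
  rewrite <- lsum_scal_l. apply lsum_le. intros p Hp.
  pose proof (path_weight_nonneg N P HP nu n p Hnu Hp).
  rewrite <- Rmult_assoc, (Rmult_comm _ (path_weight nu P p)), Rmult_assoc.
  apply Rmult_le_compat_l; auto.
  rewrite <- exp_plus.
  destruct (Rle_dec c (path_sum f p)); [apply exp_ge_1; nra | apply Rlt_le, exp_pos].
Qed.

Lemma exp_path_sum_le_classes L l p : (0 < L)%nat ->
  exp (l / INR L * path_sum f p) <=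
  / INR L * sumR L (fun r => exp (l * time_sum (class_restrict L r f) 0 p)).
Proof.
  intros HL. assert (0 < INR L) by (apply lt_0_INR; auto).
  replace (l / INR L * path_sum f p)
    with (sumR L (fun r => l * time_sum (class_restrict L r f) 0 p) / INR L).
  - rewrite Rmult_comm. apply exp_mean_le_mean_exp; auto.
  - rewrite sumR_scal_l, sumR_time_sum, (path_sum_time_sum f p 0).
    rewrite (time_sum_ext _ (fun _ x => f x)); [field; lra|].
    intros t x. apply sumR_class_restrict; auto.
Qed.

Lemma prob_sum_ge_blocked L l K m c : (0 < L)%nat -> 0 <= K -> 0 <= l ->
  (forall x, (x < N)%nat -> -1 <= f x <= 1) ->
  (forall x, (x < N)%nat -> transition_mean N P L (fun y => exp (l * f y)) x <= exp K) ->
  prob_sum_ge N nu P f (S m) c <= exp (- (l / INR L) * c) * (exp l * exp (K * INR (m / L))).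
Proof.
  intros HL HK Hl Hf Hstep. assert (HLr : 0 < INR L) by (apply lt_0_INR; auto).
  assert (Hth : 0 <= l / INR L) by (apply Rmult_le_pos; [auto | apply Rlt_le, Rinv_0_lt_compat; auto]).
  eapply Rle_trans; [apply prob_sum_ge_exp_moment, Hth|].
  apply Rmult_le_compat_l; [apply Rlt_le, exp_pos|].
  apply Rle_trans with (lsum (all_paths N (S m)) (fun p => / INR L *
     sumR L (fun r => path_weight nu P p * exp (l * time_sum (class_restrict L r f) 0 p)))).
  - apply lsum_le. intros p Hp. rewrite sumR_scal_l, <- Rmult_assoc, (Rmult_comm (/ INR L)), Rmult_assoc.
    apply Rmult_le_compat_l; [apply (path_weight_nonneg N P HP nu _ p Hnu Hp)|].
    apply exp_path_sum_le_classes; auto.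
  - rewrite lsum_scal_l, lsum_sumR.
    apply Rle_trans with (/ INR L * sumR L (fun _ => exp l * exp (K * INR (m / L)))).
    + apply Rmult_le_compat_l; [apply Rlt_le, Rinv_0_lt_compat; auto|].
      apply sumR_le. intros r _. apply class_exp_moment; auto.
    + rewrite sumR_const. apply Req_le. field. lra.
Qed.

Lemma prob_sum_ge_le_1 m c : prob_sum_ge N nu P f (S m) c <= 1.
Proof.
  eapply Rle_trans; [apply (prob_sum_ge_exp_moment _ _ 0); lra|].
  replace (- 0 * c) with 0 by ring. rewrite exp_0, Rmult_1_l.
  rewrite (lsum_ext _ _ (fun p => path_weight nu P p * exp (0 * time_sum (fun _ x => f x) 0 p)))
    by (intros p _; rewrite (path_sum_time_sum f p 0); reflexivity).
  rewrite path_exp_moment, <- (proj2 Hnu). apply Req_le, sumR_ext. intros x Hx.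
  rewrite feynman_kac_ones; auto; [rewrite Rmult_0_l, exp_0; ring|].
  intros; rewrite Rmult_0_l; apply exp_0.
Qed.

End Chernoff.

Lemma pi_star_nonneg N pi : (0 < N)%nat -> is_distribution N pi -> 0 <= pi_star N pi.
Proof.
  intros HN Hpi. unfold pi_star. destruct (minR_spec N pi HN) as [_ [i [Hi ->]]].
  apply (proj1 Hpi); auto.
Qed.

Lemma pi_star_le_half N pi : (2 <= N)%nat -> is_distribution N pi -> pi_star N pi <= / 2.
Proof.
  intros HN Hpi. unfold pi_star. destruct (minR_spec N pi ltac:(lia)) as [Hmin _].
  pose proof (Hmin 0%nat ltac:(lia)). pose proof (Hmin 1%nat ltac:(lia)).
  assert (sumR 2 pi <= sumR N pi) by (apply sumR_mono_n; auto; apply (proj1 Hpi)).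
  rewrite (proj2 Hpi) in H1. simpl in H1. lra.
Qed.

(* On a single state every chain is already mixed at time 0. *)
Lemma two_states_of_mixing_time_pos N P pi T : (0 < N)%nat -> is_invariant N P pi ->
  is_mixing_time N P pi T -> (1 <= T)%nat -> (2 <= N)%nat.
Proof.
  intros HN Hpi HT HT1. destruct (Nat.eq_dec N 1) as [->|]; [|lia]. exfalso.
  apply (proj2 HT 0%nat); [lia|]. intros x Hx. replace x with 0%nat by lia.
  pose proof (proj2 (proj1 Hpi)) as Hsum. unfold tv. simpl in *.
  rewrite Rplus_0_l in Hsum. rewrite Hsum, Rminus_diag, Rabs_R0. lra.
Qed.

Lemma block_length X : 0 < X <= / 16 ->
  exists j, (1 <= j)%nat /\ (/ 2) ^ j <= X /\ 4 <= - log2 X /\ INR j <= 5 / 4 * - log2 X.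
Proof.
  intros HX. set (k := - log2 X).
  assert (Hln2 : 0 < ln 2) by (rewrite <- ln_1; apply ln_increasing; lra).
  assert (HkX : k * ln 2 = - ln X) by (unfold k, log2; field; lra).
  assert (Hk4 : 4 <= k).
  { assert (ln X <= ln (/ 16)).
    { destruct (proj2 HX) as [h| ->]; [apply Rlt_le, ln_increasing; lra | lra]. }
    rewrite ln_Rinv in H by lra. replace 16 with (2 ^ 4) in H by ring.
    rewrite ln_pow in H by lra. simpl INR in H. nra. }
  destruct (archimed k) as [Hup1 Hup2].
  exists (Z.to_nat (up k)).
  assert (Hj : INR (Z.to_nat (up k)) = IZR (up k)).
  { rewrite INR_IZR_INZ, Z2Nat.id; auto. apply le_IZR. lra. }
  repeat split; [apply INR_le; rewrite Hj; simpl; lra | | lra | lra].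
  rewrite <- (exp_ln ((/ 2) ^ _)) by (apply pow_lt; lra).
  rewrite ln_pow, ln_Rinv, <- (exp_ln X) by lra.
  apply exp_le_exp. rewrite Hj. nra.
Qed.

(* [pi(exp (l f)) <= 1 + 7/10 l^2 s2] by the quadratic bound on [exp] and [pi(f) = 0];
   the mixing error is at most [2^-j] times the oscillation of [exp (l f)]. *)
Lemma mixing_exp_moment N P pi T j f l s2 x : (0 < N)%nat -> is_stochastic N P ->
  is_invariant N P pi -> mixed_at N P pi T ->
  (forall y, (y < N)%nat -> -1 <= f y <= 1) ->
  sumR N (fun y => pi y * f y) = 0 -> sumR N (fun y => pi y * f y ^ 2) <= s2 ->
  0 <= l <= / 2 -> (x < N)%nat ->
  transition_mean N P (j * T) (fun y => exp (l * f y)) x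
  <= 1 + 7 / 10 * l ^ 2 * s2 + (/ 2) ^ j * (exp l - exp (- l)).
Proof.
  intros HN HP Hpi HT Hf Hmean Hvar Hl Hx.
  assert (Hexp : exp (- l) <= exp l) by (apply exp_le_exp; lra).
  eapply Rle_trans.
  { apply (transition_mean_le_mixing N P HP pi T HT _ (exp (- l)) (exp l - exp (- l))); auto; [lra|].
    intros y Hy. destruct (Hf y Hy). replace (exp (- l) + (exp l - exp (- l))) with (exp l) by ring.
    split; apply exp_le_exp; nra. }
  apply Rplus_le_compat_r.
  apply Rle_trans with (sumR N (fun z => pi z + l * (pi z * f z) + 7 / 10 * l ^ 2 * (pi z * f z ^ 2))).
  - apply sumR_le. intros z Hz. destruct (Hf z Hz). pose proof (proj1 (proj1 Hpi) z Hz).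
    assert (exp (l * f z) <= 1 + l * f z + 7 / 10 * (l * f z) ^ 2) by (apply exp_le_quadratic; nra).
    nra.
  - rewrite !sumR_plus, !sumR_scal_l, Hmean, (proj2 (proj1 Hpi)).
    assert (0 <= l ^ 2) by nra. nra.
Qed.

(* Rocq's [ln] returns 0 outside its domain. *)
Lemma log2_0 : log2 0 = 0.
Proof.
  unfold log2, ln. destruct (Rlt_dec 0 0) as [H0|]; [destruct (Rlt_irrefl 0 H0)|]. apply Rdiv_0_l.
Qed.

Lemma tail_rhs_ge_1 a c : a <= 1 -> 0 <= c -> 1 <= 4 * exp (- (floorR (a - 1) * c)).
Proof.
  intros Ha Hc. assert (floorR (a - 1) <= a - 1) by apply base_Int_part.
  assert (1 <= exp (- (floorR (a - 1) * c))) by (apply exp_ge_1; nra). lra.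
Qed.

(* The Chernoff exponent [-(g/2) y] beats the cost [27/100 g] of each of at most [y] blocks. *)
Lemma chernoff_exponent_le g y q r : 0 < g -> 0 <= q <= y -> 0 < r <= 5 / 4 ->
  - (g / 2 * y) + 27 / 100 * g * q <= - (floorR (y * r - 1) * (g / 6)).
Proof.
  intros Hg Hq Hr. assert (floorR (y * r - 1) <= y * r - 1) by apply base_Int_part.
  assert (floorR (y * r - 1) * (g / 6) <= (y * r - 1) * (g / 6)) by (apply Rmult_le_compat_r; lra).
  assert (y * r <= 5 / 4 * y) by nra. assert (g * q <= g * y) by nra.
  nra.
Qed.

Lemma blocked_tail_arith a jr tT k q gamma s2 : 0 < gamma <= s2 -> 1 <= jr -> 1 <= tT -> 0 < a ->
  4 <= k -> jr <= 5 / 4 * k -> 0 <= q -> jr * tT * q <= a ->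
  let l := gamma / (2 * s2) in
  exp (- (l / (jr * tT)) * (a * gamma)) * (exp l * exp (27 / 100 * (gamma ^ 2 / s2) * q))
  <= 4 * exp (- (floorR (a / (k * tT) - 1) * (gamma ^ 2 / (6 * s2)))).
Proof.
  intros Hg Hjr HtT Ha Hk Hjk Hq Hqa l.
  set (g := gamma ^ 2 / s2). set (y := a / (jr * tT)).
  assert (Hg0 : 0 < g) by (apply Rdiv_lt_0_compat; nra).
  assert (Hqy : q <= y) by (unfold y; apply Rle_div_r; nra).
  replace (- (l / (jr * tT)) * (a * gamma)) with (- (g / 2 * y)) by (unfold l, g, y; field; lra).
  replace (a / (k * tT)) with (y * (jr / k)) by (unfold y; field; lra).
  replace (gamma ^ 2 / (6 * s2)) with (g / 6) by (unfold g; field; lra).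
  rewrite Rmult_comm, Rmult_assoc, <- exp_plus.
  apply Rmult_le_compat.
  - apply Rlt_le, exp_pos.
  - apply Rlt_le, exp_pos.
  - apply exp_le_4. unfold l. apply Rle_div_l; lra.
  - apply exp_le_exp.
    assert (Hr : 0 < jr / k <= 5 / 4) by (split; [apply Rdiv_lt_0_compat | apply Rle_div_l]; lra).
    pose proof (chernoff_exponent_le g y q (jr / k) Hg0 (conj Hq Hqy) Hr). lra.
Qed.

Lemma tail_bound_nondegenerate N P nu pi T m f sigma gamma :
  (0 < N)%nat -> is_stochastic N P -> is_distribution N nu -> is_invariant N P pi ->
  is_mixing_time N P pi T -> (1 <= T)%nat -> 0 < pi_star N pi ->
  (forall x, (x < N)%nat -> -1 <= f x <= 1) ->
  sumR N (fun x => pi x * f x) = 0 -> sumR N (fun x => pi x * (f x)^2) <= sigma^2 ->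
  0 < gamma -> gamma <= sigma^2 -> gamma <= / 2 ->
  prob_sum_ge N nu P f (S m) (INR (S m) * gamma)
  <= 4 * exp (- (floorR (INR (S m) / (- log2 (pi_star N pi * gamma^2 / (6 * sigma^2)) * INR T) - 1)
                 * (gamma^2 / (6 * sigma^2)))).
Proof.
  intros HN HP Hnu Hpi HT HT1 Hps Hf Hmean Hvar Hg Hgs Hgh.
  set (s2 := sigma ^ 2) in *. set (g := gamma ^ 2 / s2).
  assert (Hg0 : 0 < g) by (apply Rdiv_lt_0_compat; nra).
  assert (Hgg : g <= gamma) by (apply Rle_div_l; nra).
  pose proof (pi_star_le_half N pi (two_states_of_mixing_time_pos N P pi T HN Hpi HT HT1) (proj1 Hpi)).
  assert (HX : pi_star N pi * gamma ^ 2 / (6 * s2) = pi_star N pi * g / 6) by (unfold g; field; lra).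
  destruct (block_length (pi_star N pi * gamma ^ 2 / (6 * s2))) as [j [Hj1 [Hhalf [Hk4 Hjk]]]];
    [rewrite HX; split; nra|].
  set (l := gamma / (2 * s2)).
  assert (Hl : 0 <= l <= / 2) by (split; [apply Rlt_le, Rdiv_lt_0_compat | apply Rle_div_l]; lra).
  assert (Hstep : forall x, (x < N)%nat ->
    transition_mean N P (j * T) (fun y => exp (l * f y)) x <= exp (27 / 100 * g)).
  { intros x Hx. eapply Rle_trans; [apply (mixing_exp_moment N P pi T j f l s2 x); auto; apply HT|].
    assert (Hl2 : l ^ 2 * s2 = g / 4) by (unfold l, g; field; lra).
    assert (Hhalf' : (/ 2) ^ j <= g / 12) by (rewrite HX in Hhalf; nra).
    pose proof (exp_sub_exp_opp_le l Hl). pose proof (exp_ineq1_le (27 / 100 * g)).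
    assert (0 <= exp l - exp (- l)) by (pose proof (exp_le_exp (- l) l); lra).
    assert (0 <= (/ 2) ^ j) by (apply pow_le; lra).
    assert ((/ 2) ^ j * (exp l - exp (- l)) <= g / 12 * (1071 / 1000))
      by (apply Rmult_le_compat; auto).
    nra. }
  eapply Rle_trans; [apply (prob_sum_ge_blocked N P nu f HP Hnu (j * T) l (27 / 100 * g));
                     [lia | lra | apply Hl | exact Hf | exact Hstep]|].
  rewrite mult_INR.
  apply blocked_tail_arith; auto.
  - apply (le_INR 1); lia.
  - apply (le_INR 1); lia.
  - apply lt_0_INR; lia.
  - apply pos_INR.
  - rewrite <- !mult_INR. apply le_INR. pose proof (Nat.div_mod m (j * T) ltac:(lia)). lia.
Qed.

Theorem theoremA1 (N : nat) (P : nat -> nat -> R) (nu pi : nat -> R) (T : nat)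
  (HN : (0 < N)%nat)
  (HP : is_stochastic N P)
  (Hnu : is_distribution N nu)
  (Hpi : is_invariant N P pi)
  (HT : is_mixing_time N P pi T)
  (n : nat) (Hn : (1 <= n)%nat)
  (f : nat -> R) (Hf : forall x, (x < N)%nat -> -1 <= f x <= 1)
  (sigma gamma : R)
  (Hmean : sumR N (fun x => pi x * f x) = 0)
  (Hvar : sumR N (fun x => pi x * (f x)^2) <= sigma^2)
  (Hgpos : 0 < gamma) (Hgs : gamma <= sigma^2) (Hgh : gamma <= / 2) :
  let k := - log2 (pi_star N pi * gamma^2 / (6 * sigma^2)) in
  prob_sum_ge N nu P f n (INR n * gamma)
  <= 4 * exp (- (floorR (INR n / (k * INR T) - 1) * (gamma^2 / (6 * sigma^2)))).
Proof.
  intros k. destruct n as [|m]; [lia|].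
  assert (Hcases : k * INR T = 0 \/ ((1 <= T)%nat /\ 0 < pi_star N pi)).
  { destruct (Nat.eq_dec T 0) as [->|HT0]; [left; simpl; ring|].
    destruct (Rle_lt_dec (pi_star N pi) 0) as [Hps|Hps]; [left|right; split; auto; lia].
    unfold k. replace (pi_star N pi) with 0 by (pose proof (pi_star_nonneg N pi HN (proj1 Hpi)); lra).
    rewrite Rmult_0_l, Rdiv_0_l, log2_0. ring. }
  destruct Hcases as [Hk0|[HT1 Hps]].
  - (* Rocq's division by zero returns 0 *)
    rewrite Hk0, Rdiv_0_r.
    eapply Rle_trans; [apply prob_sum_ge_le_1; auto|].
    apply tail_rhs_ge_1; [lra|]. apply Rlt_le, Rdiv_lt_0_compat; nra.
  - apply tail_bound_nondegenerate; auto.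
Qed.
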